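(* For any $j,j'\in\mathsf{R}'$, $j\ne j'$ implies $\mathrm{efull}(j)\ne\mathrm{efull}(j')$.
   Context: $T\in[0\mathinner{.\,.}\sigma)^n$ with $2\le\sigma<n^{1/7}$; $\tau=\lfloor\mu\log_\sigma n\rfloor$ for a fixed positive constant $\mu<1/6$ with $\tau\ge1$. $\mathrm{per}(S)$ is the shortest period of $S$. $\mathsf{R}=\{i\in[1\mathinner{.\,.}n-3\tau+2]:\mathrm{per}(T[i\mathinner{.\,.}i+3\tau-2])\le\tau/3\}$ and $\mathsf{R}'=\{j\in\mathsf{R}:j-1\notin\mathsf{R}\}$. For $j\in\mathsf{R}$: $\mathrm{end}(j)=\min\{j'\ge j:j'\notin\mathsf{R}\}+3\tau-2$; with $p=\mathrm{per}(T[j\mathinner{.\,.}j+3\tau-1))$, $\mathrm{Lroot}(j)=\min\{T[j+t\mathinner{.\,.}j+t+p):t\in[0\mathinner{.\,.}p)\}$ (lexicographic minimum); with $H=\mathrm{Lroot}(j)$, $T[j\mathinner{.\,.}\mathrm{end}(j))$ is uniquely written as $H'H^kH''$ with $H'$ a proper suffix and $H''$ a proper prefix of $H$, $\mathrm{Ltail}(j)=|H''|$, and $\mathrm{efull}(j)=\mathrm{end}(j)-\mathrm{Ltail}(j)$. *)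

From mathcomp Require Import all_boot.
Set Implicit Arguments. Unset Strict Implicit. Unset Printing Implicit Defensive.

(* Strings are [seq nat]; positions are 1-based as in the paper:
   T[i] = nth 0 T i.-1. *)

Definition sub (T : seq nat) (i l : nat) : seq nat := take l (drop i.-1 T).

Definition is_period (S : seq nat) (p : nat) : bool :=
  (0 < p) && all (fun k => nth 0 S k == nth 0 S (k + p)) (iota 0 (size S - p)).

(* per S = shortest period of S (|S| is always a period of a nonempty S). *)
Definition per (S : seq nat) : nat :=
  nth (size S) [seq p <- iota 1 (size S) | is_period S p] 0.

Section Runs.
Variables (T : seq nat) (tau : nat).
Let n := size T.

Definition inR (i : nat) : bool :=
  (1 <= i) && (i <= n + 2 - 3 * tau) && (3 * per (sub T i (3 * tau - 1)) <= tau).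

Definition inR' (j : nat) : bool := inR j && ~~ inR j.-1.

(* min { j' >= j : j' notin R }  (R is contained in [1..n], so the search
   over offsets 0..n+1 always succeeds; find returns the least offset). *)
Definition firstOut (j : nat) : nat :=
  j + find (fun k => ~~ inR (j + k)) (iota 0 n.+2).

Definition endp (j : nat) : nat := firstOut j + 3 * tau - 2.

Fixpoint lexle (s t : seq nat) : bool :=
  match s, t with
  | [::], _ => true
  | _ :: _, [::] => false
  | x :: s', y :: t' => (x < y) || ((x == y) && lexle s' t')
  end.

Definition lexmin (x0 : seq nat) (l : seq (seq nat)) : seq nat :=
  foldl (fun best c => if lexle c best then c else best) x0 l.

Definition rperiod (j : nat) : nat := per (sub T j (3 * tau - 1)).

Definition Lroot (j : nat) : seq nat :=
  let p := rperiod j in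
  lexmin (sub T j p) [seq sub T (j + t) p | t <- iota 0 p].

(* S = H' H^k H'' with H' a proper suffix of H (|H'| = a < |H|) and
   H'' a proper prefix of H (|H''| = b < |H|). *)
Definition decomp (S H : seq nat) (b : nat) : bool :=
  (b < size H) &&
  has (fun a => has (fun k =>
         S == drop (size H - a) H ++ flatten (nseq k H) ++ take b H)
       (iota 0 (size S).+1))
    (iota 0 (size H)).

(* Ltail(j) = |H''| in the (unique) decomposition of T[j .. end(j)). *)
Definition Ltail (j : nat) : nat :=
  let H := Lroot j in
  let S := sub T j (endp j - j) in
  find (decomp S H) (iota 0 (size H)).

Definition efull (j : nat) : nat := endp j - Ltail j.

End Runs.

From mathcomp Require Import all_boot.
From Stdlib Require Import Reals.
From mathcomp Require Import zify.
Set Implicit Arguments. Unset Strict Implicit.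

(* Inside a run (a maximal interval of R) all windows share one period of
   length at most tau/3: consecutive windows overlap in 3tau-2 positions, so
   by the Fine-Wilf argument their periods merge into their gcd.  Now let
   j < j' start two runs.  The run of j ends before j', and if we had
   efull(j') <= efull(j) <= end(j), then, as Ltail(j') <= tau/3, the periodic
   factors T[j..end(j)) and T[j'..end(j')) would overlap in more than 2tau/3
   positions and merge as well; the window at j'-1 would then be periodic,
   i.e. j'-1 in R, contradicting j' in R'.  So efull is increasing on R'. *)

(* 0-based and half-open: the factor nth 0 T a, ..., nth 0 T b.-1 has
   period p. *)
Definition periodic (T : seq nat) (a b p : nat) : Prop :=
  forall i, a <= i -> i + p < b -> nth 0 T i = nth 0 T (i + p).

Section Periodicity.
Variable T : seq nat.

Lemma periodic_sub a b a' b' p :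
  a <= a' -> b' <= b -> periodic T a b p -> periodic T a' b' p.
Proof. by move=> ha hb Hp i hi1 hi2; apply: Hp; lia. Qed.

Lemma nth_periodic_mul a b p k x : periodic T a b p -> a <= x ->
  x + k * p < b -> nth 0 T x = nth 0 T (x + k * p).
Proof.
move=> Hp ax; elim: k => [|k IHk] hb; first by rewrite addn0.
by rewrite IHk ?mulSnr ?addnA; [apply: Hp|]; lia.
Qed.

Lemma periodic_eqmod a b p x y : periodic T a b p ->
  a <= x -> x < b -> a <= y -> y < b -> x = y %[mod p] ->
  nth 0 T x = nth 0 T y.
Proof.
move=> Hp; wlog le_xy : x y / x <= y.
  move=> WL ax xb ay yb exy.
  by case: (leqP x y) => [|/ltnW] h; [|symmetry]; apply: WL.
move=> ax _ _ yb /eqP; rewrite eq_sym eqn_mod_dvd // => /dvdnP [k eyx].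
rewrite -(subnKC le_xy) eyx; apply: (nth_periodic_mul Hp) => //; lia.
Qed.

Lemma exists_eqmod c p i : 0 < p -> exists2 x, c <= x < c + p & x = i %[mod p].
Proof.
move=> p_gt0; exists (c + (i + c * p - c) %% p).
  by rewrite leq_addr ltn_add2l ltn_pmod.
have le_c : c <= i + c * p by rewrite (leq_trans (leq_pmulr c p_gt0)) ?leq_addl.
by rewrite modnDmr subnKC // addnC modnMDl.
Qed.

Lemma periodic_subn a b p q : p < q -> a + p + q <= b ->
  periodic T a b p -> periodic T a b q -> periodic T a b (q - p).
Proof.
move=> lt_pq hb Hp Hq i hi1 hi2; case: (leqP (a + p) i) => hi.
- have -> : i = i - p + p by lia.
  rewrite -Hp; try lia.
  rewrite Hq; try lia.
  congr nth; lia.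
- rewrite Hq; try lia.
  rewrite (Hp (i + (q - p))); try lia.
  congr nth; lia.
Qed.

(* Fine-Wilf, in the weak form with overlap p + q. *)
Lemma periodic_gcdn a b p q : 0 < p -> 0 < q -> a + p + q <= b ->
  periodic T a b p -> periodic T a b q -> periodic T a b (gcdn p q).
Proof.
have [s] := ubnP (p + q); elim: s => // s IHs in p q *.
move=> lt_pq_s p_gt0 q_gt0 hb Hp Hq.
wlog le_pq : p q lt_pq_s p_gt0 q_gt0 hb Hp Hq / p <= q.
  move=> WL; case: (leqP p q) => [|/ltnW] h; first exact: WL.
  by rewrite gcdnC; apply: WL => //; lia.
case: (ltngtP p q) le_pq => [lt_pq _|//|<- _]; last by rewrite gcdnn.
have -> : gcdn p q = gcdn p (q - p) by rewrite -{1}(subnK (ltnW lt_pq)) gcdnDr.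
apply: IHs (periodic_subn lt_pq hb Hp Hq) => //; lia.
Qed.

(* A window of length p + g fixes every residue class modulo p, so a period g
   on it propagates to the whole p-periodic factor, g | p or not. *)
Lemma periodic_extend a b c d p g : 0 < p -> a <= c -> d <= b ->
  c + p + g <= d -> periodic T a b p -> periodic T c d g -> periodic T a b g.
Proof.
move=> p_gt0 ac db hd Hp Hg i hi1 hi2.
have [x /andP [cx xc] exi] := exists_eqmod c i p_gt0.
have Tix : nth 0 T i = nth 0 T x.
  by apply: (periodic_eqmod Hp); rewrite ?exi //; lia.
have Tixg : nth 0 T (i + g) = nth 0 T (x + g).
  by apply: (periodic_eqmod Hp); [lia..|rewrite -modnDml -exi modnDml].
by rewrite Tix Tixg Hg //; lia.
Qed.

Lemma periodic_union a b c d g : a <= c -> c + g <= b ->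
  periodic T a b g -> periodic T c d g -> periodic T a d g.
Proof.
move=> ac hb H1 H2 i hi1 hi2.
by case: (ltnP (i + g) b) => h; [apply: H1 | apply: H2]; lia.
Qed.

Lemma periodic_merge a b c d p q : 0 < p -> 0 < q -> a <= c ->
  c + p + q <= b -> b <= d -> periodic T a b p -> periodic T c d q ->
  periodic T a d (gcdn p q).
Proof.
move=> p_gt0 q_gt0 ac hb bd Hp Hq.
have le_gp : gcdn p q <= p by rewrite dvdn_leq ?dvdn_gcdl.
have le_gq : gcdn p q <= q by rewrite dvdn_leq ?dvdn_gcdr.
have Hcb : periodic T c b (gcdn p q).
  by apply: periodic_gcdn; rewrite // ?addnA //;
    [apply: periodic_sub Hp | apply: periodic_sub Hq]; lia.
apply: (@periodic_union _ b c) => //; first lia.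
- by apply: (periodic_extend (c := c) (d := b) p_gt0) => //; lia.
- by apply: (periodic_extend (c := c) (d := b) q_gt0) => //; lia.
Qed.

End Periodicity.

Lemma nth_sub T i L k : k < L -> nth 0 (sub T i L) k = nth 0 T (i.-1 + k).
Proof. by move=> lt_kL; rewrite /sub nth_take // nth_drop. Qed.

Lemma size_sub T i L : i.-1 + L <= size T -> size (sub T i L) = L.
Proof. by move=> hs; rewrite /sub size_takel // size_drop; lia. Qed.

Lemma size_sub_le T i L : size (sub T i L) <= L.
Proof. by rewrite /sub size_take_min geq_minl. Qed.

Lemma is_period_sub T i L p : i.-1 + L <= size T ->
  is_period (sub T i L) p <-> 0 < p /\ periodic T i.-1 (i.-1 + L) p.
Proof.
move=> hs; rewrite /is_period size_sub //; split.
- case/andP=> p_gt0 /allP Hp; split=> // x h1 h2.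
  have /eqP := Hp (x - i.-1) (ltac:(rewrite mem_iota; lia)).
  by rewrite !nth_sub ?addnA ?subnKC //; lia.
- case=> p_gt0 Hp; rewrite p_gt0; apply/allP => k; rewrite mem_iota => hk.
  by rewrite !nth_sub ?addnA; [apply/eqP/Hp|..]; lia.
Qed.

Lemma nth0_filter_iota_le (P : pred nat) m k x d :
  x \in filter P (iota m k) -> nth d (filter P (iota m k)) 0 <= x.
Proof.
elim: k m => [|k IHk] m //=; case: (P m) => /=; last exact: IHk.
by rewrite inE => /orP [/eqP -> //|]; rewrite mem_filter mem_iota; lia.
Qed.

Lemma per_is_period S : 0 < size S -> is_period S (per S).
Proof.
move=> S_gt0; set ps := [seq p <- iota 1 (size S) | is_period S p].
have size_in : size S \in ps.
  by rewrite mem_filter mem_iota /is_period S_gt0 subnn /=; lia.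
have : nth (size S) ps 0 \in ps by apply: mem_nth; case: ps size_in.
by rewrite mem_filter => /andP [].
Qed.

Lemma per_min S g : is_period S g -> g <= size S -> per S <= g.
Proof.
move=> Sg le_gS; apply: nth0_filter_iota_le.
by rewrite mem_filter Sg mem_iota; case/andP: Sg; lia.
Qed.

Lemma size_lexmin x0 l p : size x0 <= p -> all (fun s => size s <= p) l ->
  size (lexmin x0 l) <= p.
Proof.
elim: l x0 => //= c l IHl x0 hx0 /andP [hc hl].
by apply: IHl => //; case: ifP.
Qed.

Lemma Ltail_le_rperiod T tau j : Ltail T tau j <= rperiod T tau j.
Proof.
rewrite /Ltail; apply: leq_trans (find_size _ _) _; rewrite size_iota.
apply: size_lexmin; first exact: size_sub_le.
by apply/allP => s /mapP [t _ ->]; apply: size_sub_le.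
Qed.

Section Runs.
Variables (T : seq nat) (tau : nat).
Hypothesis tau_gt0 : 0 < tau.

Lemma inR_rperiod i : inR T tau i ->
  [/\ 0 < rperiod T tau i, 3 * rperiod T tau i <= tau &
      periodic T i.-1 (i.-1 + (3 * tau - 1)) (rperiod T tau i)].
Proof.
case/andP=> /andP [i_gt0 hi] hper.
have hs : i.-1 + (3 * tau - 1) <= size T by lia.
have [p_gt0 Hp] :
    0 < rperiod T tau i /\ periodic T i.-1 (i.-1 + (3 * tau - 1)) (rperiod T tau i).
  by apply/(is_period_sub _ hs)/per_is_period; rewrite size_sub //; lia.
by split.
Qed.

Lemma periodic_inR i g : 0 < i -> i <= size T + 2 - 3 * tau -> 0 < g ->
  3 * g <= tau -> periodic T i.-1 (i.-1 + (3 * tau - 1)) g -> inR T tau i.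
Proof.
move=> i_gt0 hi g_gt0 hg Hg.
have hs : i.-1 + (3 * tau - 1) <= size T by lia.
have /per_min : is_period (sub T i (3 * tau - 1)) g by apply/is_period_sub.
by rewrite /inR i_gt0 hi size_sub //; lia.
Qed.

Lemma firstOut_in j k : j <= k -> k < firstOut T tau j -> inR T tau k.
Proof.
rewrite /firstOut; set P := fun k => ~~ inR T tau (j + k) => jk lt_k.
have lt_kj_find : k - j < find P (iota 0 (size T).+2) by lia.
have := before_find 0 lt_kj_find; rewrite nth_iota; last first.
  by have := find_size P (iota 0 (size T).+2); rewrite size_iota; lia.
by rewrite /P add0n subnKC // => /negbFE.
Qed.

Lemma firstOut_gt j : inR T tau j -> j < firstOut T tau j.
Proof. by move=> hj; rewrite /firstOut /= addn0 hj /=; lia. Qed.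

Lemma firstOut_le j x : j <= x -> ~~ inR T tau x -> firstOut T tau j <= x.
Proof.
move=> jx; apply: contraR; rewrite -ltnNge; exact: firstOut_in.
Qed.

Lemma run_prefix_periodic j r : inR T tau j -> j + r < firstOut T tau j ->
  exists g, [/\ 0 < g, 3 * g <= tau &
                periodic T j.-1 ((j + r).-1 + (3 * tau - 1)) g].
Proof.
move=> hj; elim: r => [|r IHr] hr.
  by have [] := inR_rperiod hj; rewrite addn0; exists (rperiod T tau j).
have [|g [g_gt0 hg Hg]] := IHr; first lia.
have /inR_rperiod [p_gt0 hp Hp] : inR T tau (j + r.+1).
  by apply: firstOut_in hr; apply: leq_addr.
have j_gt0 : 0 < j by case/andP: hj => /andP [].
exists (gcdn g (rperiod T tau (j + r.+1))); split.
- by rewrite gcdn_gt0 g_gt0.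
- by have := dvdn_leq g_gt0 (dvdn_gcdl g (rperiod T tau (j + r.+1))); lia.
- by apply: (periodic_merge g_gt0 p_gt0 _ _ _ Hg Hp); lia.
Qed.

Lemma run_periodic j : inR T tau j ->
  exists g, [/\ 0 < g, 3 * g <= tau & periodic T j.-1 (endp T tau j).-1 g].
Proof.
move=> hj; have lt_jf := firstOut_gt hj.
have [|g [g_gt0 hg Hg]] := run_prefix_periodic (r := firstOut T tau j - 1 - j) hj.
  by lia.
by exists g; split => //; apply: periodic_sub Hg; rewrite /endp; lia.
Qed.

Lemma efull_lt j j' : inR T tau j -> inR' T tau j' -> j < j' ->
  efull T tau j < efull T tau j'.
Proof.
move=> hj /andP [hj' not_hj'1] lt_jj'.
have run_j_ends : firstOut T tau j <= j'.-1 by apply: firstOut_le => //; lia.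
have lt_j'f := firstOut_gt hj'.
have [g [g_gt0 hg Hg]] := run_periodic hj.
have [g' [g'_gt0 hg' Hg']] := run_periodic hj'.
have [_ hp' _] := inR_rperiod hj'.
have htail := Ltail_le_rperiod T tau j'.
have j_gt0 : 0 < j by case/andP: hj => /andP [].
have le_j' : j' <= size T + 2 - 3 * tau by case/andP: hj' => /andP [].
rewrite ltnNge; apply: contra not_hj'1; rewrite /efull /endp in Hg Hg' * => hle.
(* As 3 Ltail(j') <= tau, the two runs overlap in more than g + g' places. *)
have Hmerge := periodic_merge g_gt0 g'_gt0 _ _ _ Hg Hg'.
apply: (periodic_inR (g := gcdn g g')); rewrite ?gcdn_gt0 ?g_gt0 //; try lia.
  by have := dvdn_leq g_gt0 (dvdn_gcdl g g'); lia.
by apply: periodic_sub (Hmerge _ _ _); lia.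
Qed.

End Runs.

Theorem lemma5p14 (sigma : nat) (T : seq nat) (mu : R) (tau : nat) :
  all (fun c => c < sigma) T ->
  2 <= sigma ->
  (INR sigma < Rpower (INR (size T)) (1 / 7))%R ->
  (0 < mu)%R -> (mu < 1 / 6)%R ->
  Z.of_nat tau = Int_part (mu * (ln (INR (size T)) / ln (INR sigma)))%R ->
  1 <= tau ->
  forall j j' : nat, inR' T tau j -> inR' T tau j' -> j <> j' ->
    efull T tau j <> efull T tau j'.
Proof.
(* The hypotheses on sigma, mu and n only determine tau; tau >= 1 suffices. *)
move=> _ _ _ _ _ _ tau_gt0 j j' hj hj' /eqP neq_jj'; apply/eqP.
have inR'_inR i : inR' T tau i -> inR T tau i by case/andP.
case: (ltngtP j j') neq_jj' => // [lt_jj'|lt_j'j] _.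
- by rewrite ltn_eqF // efull_lt // inR'_inR.
- by rewrite gtn_eqF // efull_lt // inR'_inR.
Qed.
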